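(* Let $1<\alpha<2$, $h>0$, and let $G:\mathbb{R}\to\mathbb{R}$ be continuous. Let $(x_n)_{n\ge0}$ be a real sequence of one of the following three kinds: (a) (Caputo universal fractional map) for constants $b_0,b_1\in\mathbb{R}$, $$x_{n+1}=b_0+b_1h(n+1)-\frac{h^{\alpha}}{\Gamma(\alpha)}\sum_{k=0}^{n}G(x_k)\,(n-k+1)^{\alpha-1},\quad n\ge0;$$ (b) (Caputo $h$-difference universal map) for constants $c_0,c_1\in\mathbb{R}$, $$x_{n+1}=c_0+c_1h(n+1)-\frac{h^{\alpha}}{\Gamma(\alpha)}\sum_{s=0}^{n-1}\frac{\Gamma(n-s-1+\alpha)}{\Gamma(n-s)}\,G(x_{s+1}),\quad n\ge0;$$ (c) (Riemann–Liouville universal fractional map) for a constant $c_1\in\mathbb{R}$, $$x_{n}=\frac{c_1}{\Gamma(\alpha)}(nh)^{\alpha-1}-\frac{h^{\alpha}}{\Gamma(\alpha)}\sum_{k=0}^{n-1}(n-k)^{\alpha-1}G(x_k),\quad n\ge1.$$ Set $U(n)=n^{\alpha-1}$ in cases (a),(c) and $U(n)=\Gamma(n+\alpha-1)/\Gamma(n)$ in case (b), for $n\ge1$, with $U(0)=0$, and define the convergent series $$\tilde W_\alpha=\sum_{n=1}^{\infty}(-1)^{n+1}\bigl[U(n)-U(n-1)\bigr].$$ Suppose the limits $x_o=\lim_{n\to\infty}x_{2n+1}$ and $x_e=\lim_{n\to\infty}x_{2n}$ exist in $\mathbb{R}$ (an asymptotic period-two sink). Then $$G(x_o)+G(x_e)=0,\qquad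 x_o-x_e=\frac{\tilde W_\alpha}{2\Gamma(\alpha)}\,h^{\alpha}\bigl[G(x_o)-G(x_e)\bigr].$$
   Context: Here $G=G_K$ is the nonlinearity of the map and $\Gamma$ is the gamma function. In case (a) the first sum term at $k=n$ equals $G(x_n)$; in case (b) the kernel is the falling factorial $(n-s-2+\alpha)^{(\alpha-1)}=\Gamma(n-s-1+\alpha)/\Gamma(n-s)$. *)

From Stdlib Require Import Reals List.
From Coquelicot Require Import Coquelicot.
Open Scope R_scope.

(* Euler Gamma function, for s > 0: Gamma(s) = int_0^oo t^(s-1) e^(-t) dt
   (improper Riemann integral; only used at positive arguments). *)
Definition Gamma (s : R) : R :=
  RInt_gen (fun t => Rpower t (s - 1) * exp (- t)) (at_right 0) (Rbar_locally p_infty).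

Definition fsum (m : nat) (f : nat -> R) : R :=
  fold_right Rplus 0 (map f (seq 0 m)).

Inductive map_kind := CaputoMap | HDiffMap | RLMap.

Definition caputo_map (alpha h b0 b1 : R) (G : R -> R) (x : nat -> R) : Prop :=
  forall n : nat,
    x (S n) = b0 + b1 * h * INR (S n)
      - Rpower h alpha / Gamma alpha
        * fsum (S n) (fun k => G (x k) * Rpower (INR (n - k + 1)) (alpha - 1)).

Definition hdiff_map (alpha h c0 c1 : R) (G : R -> R) (x : nat -> R) : Prop :=
  forall n : nat,
    x (S n) = c0 + c1 * h * INR (S n)
      - Rpower h alpha / Gamma alpha
        * fsum n (fun s => Gamma (INR (n - s) - 1 + alpha) / Gamma (INR (n - s))
                            * G (x (S s))).

Definition rl_map (alpha h c1 : R) (G : R -> R) (x : nat -> R) : Prop :=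
  forall n : nat, (1 <= n)%nat ->
    x n = c1 / Gamma alpha * Rpower (INR n * h) (alpha - 1)
      - Rpower h alpha / Gamma alpha
        * fsum n (fun k => Rpower (INR (n - k)) (alpha - 1) * G (x k)).

Definition is_universal_map (K : map_kind) (alpha h : R) (G : R -> R)
    (x : nat -> R) : Prop :=
  match K with
  | CaputoMap => exists b0 b1, caputo_map alpha h b0 b1 G x
  | HDiffMap => exists c0 c1, hdiff_map alpha h c0 c1 G x
  | RLMap => exists c1, rl_map alpha h c1 G x
  end.

Definition U (K : map_kind) (alpha : R) (n : nat) : R :=
  match n with
  | O => 0
  | S _ =>
    match K with
    | HDiffMap => Gamma (INR n + alpha - 1) / Gamma (INR n)
    | _ => Rpower (INR n) (alpha - 1)
    end
  end.

(* W~_alpha = sum_{n>=1} (-1)^(n+1) [U(n) - U(n-1)], reindexed with n = m+1. *)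
Definition W_tilde (K : map_kind) (alpha : R) : R :=
  Series (fun m : nat => (-1) ^ (m + 2) * (U K alpha (S m) - U K alpha m)).

(* With c = h^alpha / Gamma(alpha), each of the three maps can be written as a convolution
   equation x_{n+1} = P_n - c * sum_{j<=n} w_j g_{n-j}, where g = G o x (from index 1 on),
   the forcing term P has convergent increments, and the kernel w_j = U(j+1) has increments
   d_j = U(j+1) - U(j) that decrease to 0 while U itself is unbounded.

   Differencing once, x_{n+2} - x_{n+1} = (P_{n+1} - P_n) - c (d * g)_{n+1} is bounded, hence so
   is (d * s)_n for s_k = g_{k+1} + g_k.  Since s_k -> G(x_o) + G(x_e) and sum_j d_j = U diverges,
   this forces G(x_o) + G(x_e) = 0.  Differencing twice, the second difference of x along even
   indices tends to 2 (x_o - x_e) and equals o(1) - c (Delta d * g)_{2m+2}.  As Delta d is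
   absolutely summable and g is asymptotically two-periodic, this convolution tends to
   (G(x_e) - G(x_o)) sum_j (-1)^j d_j = (G(x_e) - G(x_o)) W~_alpha.

   The Gamma function enters through Gamma(alpha) > 0 and, for map (b), through
   Gamma(s+1) = s Gamma(s), which makes U(n+1)/U(n) explicit; both are derived from the
   integral definition (existence by monotonicity, the recurrence by integration by parts). *)

From Stdlib Require Import Reals Lra Lia List Classical_Prop.
From Coquelicot Require Import Coquelicot.
Open Scope R_scope.

(** * The Gamma function *)

Lemma exp_le (x y : R) : x <= y -> exp x <= exp y.
Proof. intros [Hlt | ->]; [left; apply exp_increasing, Hlt | right; reflexivity]. Qed.

Lemma Rpower_pos (t a : R) : 0 < Rpower t a.
Proof. apply exp_pos. Qed.

Lemma is_derive_Rpower (a t : R) :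
  0 < t -> is_derive (fun x => Rpower x a) t (a * Rpower t (a - 1)).
Proof. intro Ht. apply is_derive_Reals, derivable_pt_lim_power, Ht. Qed.

Lemma Rpower_le_1_plus (t a : R) : 0 < t -> 0 <= a <= 1 -> Rpower t a <= 1 + t.
Proof.
  intros Ht Ha. unfold Rpower.
  destruct (Rle_dec t 1) as [Ht1 | Ht1].
  - assert (ln t <= 0) by (rewrite <- ln_1; apply ln_le; lra).
    assert (exp (a * ln t) <= exp 0) by (apply exp_le; nra).
    rewrite exp_0 in *. lra.
  - assert (0 <= ln t) by (rewrite <- ln_1; apply ln_le; lra).
    assert (exp (a * ln t) <= exp (ln t)) by (apply exp_le; nra).
    rewrite exp_ln in * by lra. lra.
Qed.

Lemma at_right_0_below (a : R) : 0 < a -> at_right 0 (fun t => 0 < t < a).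
Proof.
  intro Ha. exists (mkposreal a Ha). intros t Ht Hpos.
  apply Rabs_lt_between in Ht. simpl in Ht. unfold minus, plus, opp in Ht; simpl in Ht. lra.
Qed.

Lemma filter_prod_box (a b : R) : 0 < a ->
  filter_prod (at_right 0) (Rbar_locally p_infty)
    (fun ab => 0 < fst ab < a /\ b < snd ab).
Proof.
  intro Ha. exists (fun t => 0 < t < a) (fun t => b < t).
  - apply at_right_0_below, Ha.
  - exists b. auto.
  - simpl. auto.
Qed.

Lemma ex_RInt_continuous_pos (f : R -> R) (a b : R) :
  (forall t, 0 < t -> continuous f t) -> 0 < a -> 0 < b -> ex_RInt f a b.
Proof.
  intros Hcont Ha Hb. apply (ex_RInt_continuous (V := R_CompleteNormedModule)).
  intros t Ht. apply Hcont. pose proof (Rmin_glb_lt a b 0 Ha Hb). lra.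
Qed.

Definition gamma_integrand (s t : R) : R := Rpower t (s - 1) * exp (- t).

Lemma gamma_integrand_pos (s t : R) : 0 < gamma_integrand s t.
Proof. apply Rmult_lt_0_compat; apply exp_pos. Qed.

Lemma gamma_integrand_continuous (s t : R) : 0 < t -> continuous (gamma_integrand s) t.
Proof.
  intro Ht. apply (ex_derive_continuous (K := R_AbsRing) (V := R_NormedModule)).
  unfold gamma_integrand. auto_derive. eexists. apply is_derive_Rpower, Ht.
Qed.

Lemma RInt_gamma_integrand_le_2 (s a b : R) :
  1 <= s <= 2 -> 0 < a <= b -> RInt (gamma_integrand s) a b <= 2.
Proof.
  intros Hs Hab.
  set (F := fun t => - ((2 + t) * exp (- t))).
  assert (HF : is_RInt (fun t => (1 + t) * exp (- t)) a b (F b - F a)).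
  { apply (is_RInt_derive (V := R_CompleteNormedModule) F).
    - intros t _. unfold F. auto_derive; [exact I | ring].
    - intros t _. apply (ex_derive_continuous (K := R_AbsRing) (V := R_NormedModule)).
      auto_derive. exact I. }
  apply Rle_trans with (F b - F a).
  - apply (is_RInt_le (gamma_integrand s) (fun t => (1 + t) * exp (- t)) a b); [lra | | exact HF |].
    + apply (RInt_correct (V := R_CompleteNormedModule)), ex_RInt_continuous_pos; [| lra | lra].
      apply gamma_integrand_continuous.
    + intros t Ht. apply Rmult_le_compat_r; [left; apply exp_pos |].
      apply Rpower_le_1_plus; lra.
  - unfold F. pose proof (exp_pos (- b)). pose proof (exp_ineq1_le a).
    assert ((2 + a) * exp (- a) <= 2).
    { rewrite exp_Ropp. apply (Rmult_le_reg_r (exp a)); [apply exp_pos |].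
      rewrite Rmult_assoc, Rinv_l by (apply Rgt_not_eq, exp_pos). lra. }
    nra.
Qed.

Lemma RInt_pos_le_enlarge (f : R -> R) (a a' b' b : R) :
  (forall t, 0 < t -> continuous f t) -> (forall t, 0 < t -> 0 < f t) ->
  0 < a <= a' -> a' <= b' <= b -> RInt f a' b' <= RInt f a b.
Proof.
  intros Hcont Hpos Ha Hb.
  assert (Hge0 : forall u v, 0 < u <= v -> 0 <= RInt f u v).
  { intros u v Huv. apply RInt_ge_0; [lra | apply ex_RInt_continuous_pos; auto; lra |].
    intros t Ht. left. apply Hpos. lra. }
  rewrite <- (RInt_Chasles f a a' b), <- (RInt_Chasles f a' b' b)
    by (apply ex_RInt_continuous_pos; auto; lra).
  pose proof (Hge0 a a' Ha). pose proof (Hge0 b' b ltac:(lra)).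
  unfold plus; simpl. lra.
Qed.

Lemma is_RInt_gen_pos_bounded (f : R -> R) (M : R) :
  (forall t, 0 < t -> continuous f t) -> (forall t, 0 < t -> 0 < f t) ->
  (forall a b, 0 < a <= b -> RInt f a b <= M) ->
  exists L, 0 < L /\ is_RInt_gen f (at_right 0) (Rbar_locally p_infty) L.
Proof.
  intros Hcont Hpos HM.
  set (E := fun y => exists a b, 0 < a <= b /\ y = RInt f a b).
  destruct (completeness E) as [L [HLub HLleast]].
  { exists M. intros y [a [b [Hab ->]]]. apply HM, Hab. }
  { exists (RInt f 1 2), 1, 2. split; [lra | reflexivity]. }
  exists L. split.
  { apply Rlt_le_trans with (RInt f 1 2).
    - apply RInt_gt_0; [lra | intros; apply Hpos; lra | intros; apply Hcont; lra].
    - apply HLub. exists 1, 2. split; [lra | reflexivity]. }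
  unfold is_RInt_gen, filterlimi, filter_le, filtermapi. intros P [eps Heps].
  assert (Hnear : exists a0 b0, 0 < a0 <= b0 /\ L - eps < RInt f a0 b0).
  { apply NNPP. intro Hfar.
    assert (L <= L - eps); [| destruct eps; simpl in *; lra].
    apply HLleast. intros y [a [b [Hab ->]]].
    apply Rnot_lt_le. intro Hlt. apply Hfar. exists a, b. auto. }
  destruct Hnear as [a0 [b0 [Hab0 Hclose]]].
  eapply filter_imp; [| apply (filter_prod_box a0 b0); lra].
  intros [a b] [Ha Hb]; simpl in Ha, Hb.
  exists (RInt f a b). split.
  - apply (RInt_correct (V := R_CompleteNormedModule)), ex_RInt_continuous_pos; auto; lra.
  - apply Heps. change (Rabs (RInt f a b - L) < eps).
    assert (RInt f a b <= L) by (apply HLub; exists a, b; split; [lra | reflexivity]).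
    pose proof (RInt_pos_le_enlarge f a a0 b0 b Hcont Hpos ltac:(lra) ltac:(lra)).
    apply Rabs_lt_between. lra.
Qed.

Lemma Rpower_exp_at_right_0 (s : R) : 0 < s ->
  filterlim (fun t => Rpower t s * exp (- t)) (at_right 0) (locally 0).
Proof.
  intros Hs P [eps Heps].
  set (delta := Rpower eps (/ s)). unfold filtermap.
  apply (filter_imp (fun t => 0 < t < delta)); [| apply at_right_0_below, Rpower_pos].
  intros t Ht. apply Heps. change (Rabs (Rpower t s * exp (- t) - 0) < eps).
  assert (Hts : Rpower t s < eps).
  { replace (pos eps) with (Rpower delta s).
    - apply Rlt_Rpower_l; lra.
    - unfold delta. rewrite Rpower_mult, Rinv_l, Rpower_1 by (destruct eps; simpl; lra).
      reflexivity. }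
  assert (exp (- t) <= 1) by (rewrite <- exp_0; apply exp_le; lra).
  pose proof (Rpower_pos t s). pose proof (exp_pos (- t)).
  rewrite Rminus_0_r, Rabs_right by nra. nra.
Qed.

Lemma Rpower_exp_at_infty (s : R) :
  filterlim (fun t => Rpower t s * exp (- t)) (Rbar_locally p_infty) (locally 0).
Proof.
  assert (Hrate : is_lim (fun t => s * (ln t / t) - 1) p_infty (-1)).
  { replace (-1) with (s * 0 - 1) by ring.
    apply (is_lim_minus _ _ _ (Finite (s * 0)) (Finite 1)); [| apply is_lim_const | reflexivity].
    apply (is_lim_scal_l _ s _ (Finite 0)), is_lim_div_ln_p. }
  assert (Hexpo : is_lim (fun t => t * (s * (ln t / t) - 1)) p_infty m_infty).
  { replace m_infty with (Rbar_mult p_infty (-1)).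
    - apply is_lim_mult; [apply is_lim_id | exact Hrate | simpl; intro Hc; lra].
    - simpl. destruct (Rle_dec 0 (-1)); [exfalso; lra | reflexivity]. }
  change (is_lim (fun t => Rpower t s * exp (- t)) p_infty 0).
  apply (is_lim_ext_loc (fun t => exp (t * (s * (ln t / t) - 1)))).
  - exists 0. intros t Ht. unfold Rpower. rewrite <- exp_plus. f_equal. field. lra.
  - eapply is_lim_comp; [apply is_lim_exp_m | exact Hexpo |].
    exists 0. intros. discriminate.
Qed.

Lemma locally_pos (t : R) : 0 < t -> locally t (fun u => 0 < u).
Proof.
  intro Ht. exists (mkposreal t Ht). intros u Hu. apply Rabs_lt_between in Hu.
  simpl in Hu. unfold minus, plus, opp in Hu; simpl in Hu. lra.
Qed.

Lemma is_derive_Rpower_exp (s t : R) : 0 < t ->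
  is_derive (fun t => Rpower t s * exp (- t)) t (s * gamma_integrand s t - gamma_integrand (s + 1) t).
Proof.
  intro Ht. apply is_derive_Reals.
  replace (s * gamma_integrand s t - gamma_integrand (s + 1) t)
    with (s * Rpower t (s - 1) * exp (- t) + Rpower t s * - exp (- t))
    by (unfold gamma_integrand; replace (s + 1 - 1) with s by ring; ring).
  apply (derivable_pt_lim_mult (fun t => Rpower t s) (fun t => exp (- t))).
  - apply derivable_pt_lim_power, Ht.
  - apply is_derive_Reals. auto_derive; [exact I | ring].
Qed.

(* Integration by parts against [t ^ s * exp (- t)], whose boundary values vanish. *)
Lemma is_RInt_gen_gamma_integrand_succ (s L : R) : 0 < s ->
  is_RInt_gen (gamma_integrand s) (at_right 0) (Rbar_locally p_infty) L ->
  is_RInt_gen (gamma_integrand (s + 1)) (at_right 0) (Rbar_locally p_infty) (s * L).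
Proof.
  intros Hs HL.
  set (F := fun t => Rpower t s * exp (- t)).
  set (dF := fun t => s * gamma_integrand s t - gamma_integrand (s + 1) t).
  assert (HdF : forall t, 0 < t -> Derive F t = dF t)
    by (intros; apply is_derive_unique, is_derive_Rpower_exp; auto).
  assert (Hpos : filter_prod (at_right 0) (Rbar_locally p_infty)
            (fun ab => forall t, Rmin (fst ab) (snd ab) <= t -> 0 < t)).
  { eapply filter_imp; [| apply (filter_prod_box 1 0); lra].
    intros [a b] [Ha Hb] t Ht; simpl in *. pose proof (Rmin_glb_lt a b 0). lra. }
  assert (Hparts : is_RInt_gen (Derive F) (at_right 0) (Rbar_locally p_infty) (0 - 0)).
  { apply is_RInt_gen_Derive.
    - eapply filter_imp; [| exact Hpos]. intros ab Hab t Ht.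
      eexists. apply is_derive_Rpower_exp, Hab, Ht.
    - eapply filter_imp; [| exact Hpos]. intros ab Hab t Ht.
      assert (0 < t) by (apply Hab, Ht).
      apply (continuous_ext_loc _ dF).
      + apply (filter_imp (fun u => 0 < u)); [intros; symmetry; apply HdF; auto |].
        apply locally_pos; assumption.
      + apply (continuous_minus (V := R_NormedModule)).
        * apply (continuous_scal_r (V := R_NormedModule)), gamma_integrand_continuous; lra.
        * apply gamma_integrand_continuous; lra.
    - apply Rpower_exp_at_right_0, Hs.
    - apply Rpower_exp_at_infty. }
  replace (s * L) with (minus (scal s L) (0 - 0))
    by (unfold minus, plus, opp, scal; simpl; unfold mult; simpl; ring).
  eapply is_RInt_gen_ext; [| exact (is_RInt_gen_minus _ _ _ _ (is_RInt_gen_scal _ s _ HL) Hparts)].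
  eapply filter_imp; [| exact Hpos]. intros ab Hab t Ht.
  rewrite HdF by (apply Hab; lra).
  unfold dF, minus, plus, opp, scal; simpl; unfold mult; simpl. ring.
Qed.

Lemma gamma_integral_exists (n : nat) (s : R) : 1 <= s <= 2 + INR n ->
  exists L, 0 < L /\ is_RInt_gen (gamma_integrand s) (at_right 0) (Rbar_locally p_infty) L.
Proof.
  revert s. induction n as [| n IH]; intros s Hs.
  - apply (is_RInt_gen_pos_bounded _ 2).
    + apply gamma_integrand_continuous.
    + intros. apply gamma_integrand_pos.
    + intros a b Hab. apply RInt_gamma_integrand_le_2; simpl in Hs; lra.
  - destruct (Rle_lt_dec s 2) as [Hs2 | Hs2].
    + apply IH. pose proof (pos_INR n). lra.
    + rewrite S_INR in Hs. destruct (IH (s - 1)) as [L [HL HI]]; [lra |].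
      exists ((s - 1) * L). split; [apply Rmult_lt_0_compat; lra |].
      replace s with (s - 1 + 1) at 1 by ring.
      apply is_RInt_gen_gamma_integrand_succ; [lra | exact HI].
Qed.

Lemma Gamma_spec (s : R) : 1 <= s ->
  0 < Gamma s /\ is_RInt_gen (gamma_integrand s) (at_right 0) (Rbar_locally p_infty) (Gamma s).
Proof.
  intro Hs. destruct (INR_archimed 1 s) as [n Hn]; [lra |].
  destruct (gamma_integral_exists n s) as [L [HL HI]]; [lra |].
  assert (HGamma : Gamma s = L) by exact (is_RInt_gen_unique (V := R_CompleteNormedModule) _ _ HI).
  rewrite HGamma. split; assumption.
Qed.

Lemma Gamma_pos (s : R) : 1 <= s -> 0 < Gamma s.
Proof. intro Hs. exact (proj1 (Gamma_spec s Hs)). Qed.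

Lemma Gamma_succ (s : R) : 1 <= s -> Gamma (s + 1) = s * Gamma s.
Proof.
  intro Hs.
  assert (HI := is_RInt_gen_gamma_integrand_succ s (Gamma s) ltac:(lra) (proj2 (Gamma_spec s Hs))).
  exact (is_RInt_gen_unique (V := R_CompleteNormedModule) _ _ HI).
Qed.

(** * Finite sums and discrete convolutions *)

Lemma sum_f_R0_rev (f : nat -> R) (n : nat) :
  sum_f_R0 f n = sum_f_R0 (fun k => f (n - k)%nat) n.
Proof.
  induction n as [| n IH]; [reflexivity |].
  rewrite tech5, IH, (decomp_sum (fun k => f (S n - k)%nat)) by lia.
  simpl. ring.
Qed.

Lemma sum_f_R0_le_mono (f : nat -> R) (m p : nat) :
  (forall k, 0 <= f k) -> (m <= p)%nat -> sum_f_R0 f m <= sum_f_R0 f p.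
Proof.
  intros Hpos Hmp. induction Hmp as [| p _ IH]; [lra |].
  rewrite tech5. specialize (Hpos (S p)). lra.
Qed.

Lemma sum_f_R0_finite_support (f : nat -> R) (K n : nat) :
  (forall k, 0 <= f k) -> (forall k, (K <= k)%nat -> f k = 0) ->
  sum_f_R0 f n <= sum_f_R0 f K.
Proof.
  intros Hpos Hsupp. induction n as [| n IH].
  - apply sum_f_R0_le_mono; [exact Hpos | lia].
  - destruct (Compare_dec.le_lt_dec K (S n)) as [HK | HK].
    + rewrite tech5, (Hsupp _ HK). lra.
    + apply sum_f_R0_le_mono; [exact Hpos | lia].
Qed.

Definition delta (w : nat -> R) (j : nat) : R :=
  match j with O => w O | S i => w (S i) - w i end.

Definition conv (w g : nat -> R) (n : nat) : R :=
  sum_f_R0 (fun j => w j * g (n - j)%nat) n.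

Lemma sum_f_R0_delta (w : nat -> R) (n : nat) : sum_f_R0 (delta w) n = w n.
Proof. induction n as [| n IH]; [reflexivity |]. rewrite tech5, IH. simpl. ring. Qed.

Lemma conv_rev (w g : nat -> R) (n : nat) :
  conv w g n = sum_f_R0 (fun k => w (n - k)%nat * g k) n.
Proof.
  unfold conv. rewrite sum_f_R0_rev. apply sum_eq.
  intros k Hk. do 2 f_equal. lia.
Qed.

Lemma conv_ext_r (w g e : nat -> R) (n : nat) :
  (forall k, g k = e k) -> conv w g n = conv w e n.
Proof. intro Hge. apply sum_eq. intros. rewrite Hge. reflexivity. Qed.

Lemma conv_plus_r (w g e : nat -> R) (n : nat) :
  conv w (fun k => g k + e k) n = conv w g n + conv w e n.
Proof. unfold conv. rewrite <- plus_sum. apply sum_eq. intros. ring. Qed.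

Lemma conv_opp_r (w g : nat -> R) (n : nat) :
  conv w (fun k => - g k) n = - conv w g n.
Proof.
  unfold conv. replace (- _) with (-1 * sum_f_R0 (fun j => w j * g (n - j)%nat) n) by ring.
  rewrite scal_sum. apply sum_eq. intros. ring.
Qed.

Lemma conv_shift_r (w g : nat -> R) (n : nat) :
  conv w (fun k => g (S k)) n = conv w g (S n) - w (S n) * g O.
Proof.
  unfold conv. rewrite tech5, Nat.sub_diag.
  replace (sum_f_R0 (fun j => w j * g (S n - j)%nat) n)
    with (sum_f_R0 (fun j => w j * g (S (n - j))) n); [ring |].
  apply sum_eq. intros j Hj. rewrite Nat.sub_succ_l by exact Hj. reflexivity.
Qed.

Lemma conv_delta (w g : nat -> R) (n : nat) :
  conv w g (S n) - conv w g n = conv (delta w) g (S n).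
Proof.
  unfold conv. rewrite !(decomp_sum _ (S n)) by lia. simpl.
  replace (sum_f_R0 (fun i => (w (S i) - w i) * g (n - i)%nat) n)
    with (sum_f_R0 (fun i => w (S i) * g (n - i)%nat) n - sum_f_R0 (fun j => w j * g (n - j)%nat) n);
    [ring |].
  rewrite <- minus_sum. apply sum_eq. intros. ring.
Qed.

(** * Limits of sequences and of convolutions *)

Lemma Un_cv_ext_eventually (u v : nat -> R) (l : R) (N : nat) :
  (forall n, (N <= n)%nat -> u n = v n) -> Un_cv u l -> Un_cv v l.
Proof.
  intros Huv Hu eps Heps. destruct (Hu eps Heps) as [M HM].
  exists (max M N). intros n Hn. rewrite <- Huv by lia. apply HM. lia.
Qed.

Lemma Un_cv_const (c : R) : Un_cv (fun _ => c) c.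
Proof. apply is_lim_seq_Reals, is_lim_seq_const. Qed.

Lemma Un_cv_subseq (u : nat -> R) (phi : nat -> nat) (l : R) :
  (forall n, (n <= phi n)%nat) -> Un_cv u l -> Un_cv (fun n => u (phi n)) l.
Proof.
  intros Hphi Hu eps Heps. destruct (Hu eps Heps) as [N HN].
  exists N. intros n Hn. apply HN. specialize (Hphi n). lia.
Qed.

Lemma Un_cv_parity (u : nat -> R) (l : R) :
  Un_cv (fun m => u (2 * m)%nat) l -> Un_cv (fun m => u (2 * m + 1)%nat) l -> Un_cv u l.
Proof.
  intros He Ho eps Heps. destruct (He eps Heps) as [N1 H1]. destruct (Ho eps Heps) as [N2 H2].
  exists (2 * N1 + 2 * N2 + 1)%nat. intros n Hn.
  destruct (Nat.Even_or_Odd n) as [[k ->] | [k ->]]; [apply H1 | apply H2]; lia.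
Qed.

Lemma Un_cv_bounded (u : nat -> R) (l : R) :
  Un_cv u l -> exists B, forall n, Rabs (u n) <= B.
Proof. intro Hu. destruct (maj_by_pos u (exist _ l Hu)) as [B [_ HB]]. exists B. exact HB. Qed.

Lemma parity_cv_bounded (u : nat -> R) (lodd leven : R) :
  Un_cv (fun m => u (2 * m + 1)%nat) lodd -> Un_cv (fun m => u (2 * m)%nat) leven ->
  exists B, forall n, Rabs (u n) <= B.
Proof.
  intros Ho He.
  destruct (Un_cv_bounded _ _ Ho) as [Bo HBo]. destruct (Un_cv_bounded _ _ He) as [Be HBe].
  exists (Rabs Bo + Rabs Be). intro n.
  pose proof (Rle_abs Bo). pose proof (Rle_abs Be). pose proof (Rabs_pos Bo). pose proof (Rabs_pos Be).
  destruct (Nat.Even_or_Odd n) as [[k ->] | [k ->]];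
    [specialize (HBe k) | specialize (HBo k)]; lra.
Qed.

Lemma Un_cv_comp_eventually (G : R -> R) (u v : nat -> R) (l : R) (N : nat) :
  continuity_pt G l -> (forall n, (N <= n)%nat -> v n = G (u n)) -> Un_cv u l -> Un_cv v (G l).
Proof.
  intros HG Hv Hu. apply (Un_cv_ext_eventually (fun n => G (u n)) v _ N).
  - intros n Hn. symmetry. apply Hv, Hn.
  - apply continuity_seq; [exact HG | exact Hu].
Qed.

Lemma Un_cv_excess_finite_support (e : nat -> R) (l eta : R) : Un_cv e l -> 0 < eta ->
  exists K psi, (forall k, 0 <= psi k) /\ (forall k, (K <= k)%nat -> psi k = 0) /\
                (forall k, Rabs (e k - l) <= eta + psi k).
Proof.
  intros He Heta. destruct (He eta Heta) as [K HK].
  exists K, (fun k => Rmax 0 (Rabs (e k - l) - eta)). repeat split.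
  - intro k. apply Rmax_l.
  - intros k Hk. apply Rmax_left. specialize (HK k Hk). unfold R_dist in HK. lra.
  - intro k. pose proof (Rmax_r 0 (Rabs (e k - l) - eta)). lra.
Qed.

Lemma conv_cv_0 (a e : nat -> R) (A : R) :
  (forall n, sum_f_R0 (fun j => Rabs (a j)) n <= A) -> Un_cv a 0 -> Un_cv e 0 ->
  Un_cv (conv a e) 0.
Proof.
  intros HA Ha He eps Heps.
  assert (HA0 : 0 <= A) by (specialize (HA O); simpl in HA; pose proof (Rabs_pos (a O)); lra).
  set (eta := eps / (2 * (A + 1))).
  destruct (Un_cv_excess_finite_support e 0 eta He) as [K [psi [Hpsi0 [HpsiK Hpsi]]]].
  { apply Rdiv_lt_0_compat; lra. }
  set (C := sum_f_R0 psi K).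
  assert (HC : forall n, sum_f_R0 psi n <= C) by (intro; apply sum_f_R0_finite_support; assumption).
  assert (HC0 : 0 <= C) by (apply cond_pos_sum, Hpsi0).
  set (theta := eps / (2 * (C + 1))).
  destruct (Ha theta) as [N HN]; [apply Rdiv_lt_0_compat; lra |].
  exists (N + K)%nat. intros n Hn. unfold R_dist. rewrite Rminus_0_r.
  (* where [e (n - j)] is not yet small, [j] is large and so is [a j] small *)
  assert (Hterm : forall j, (j <= n)%nat ->
            Rabs (a j * e (n - j)%nat) <= Rabs (a j) * eta + psi (n - j)%nat * theta).
  { intros j Hj. rewrite Rabs_mult.
    specialize (Hpsi (n - j)%nat). rewrite Rminus_0_r in Hpsi.
    assert (Rabs (a j) * psi (n - j)%nat <= psi (n - j)%nat * theta).
    { destruct (Compare_dec.le_lt_dec K (n - j)) as [HKj | HKj].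
      - rewrite (HpsiK _ HKj). lra.
      - specialize (HN j ltac:(lia)). unfold R_dist in HN. rewrite Rminus_0_r in HN.
        specialize (Hpsi0 (n - j)%nat). nra. }
    pose proof (Rabs_pos (a j)). nra. }
  unfold conv. eapply Rle_lt_trans; [apply Rsum_abs |].
  eapply Rle_lt_trans; [apply sum_Rle, Hterm |].
  rewrite plus_sum, <- (scal_sum (fun j => Rabs (a j))), <- (scal_sum (fun j => psi (n - j)%nat)),
    <- sum_f_R0_rev.
  specialize (HA n). specialize (HC n).
  assert (eta * A = eps / 2 - eta) by (unfold eta; field; lra).
  assert (theta * C = eps / 2 - theta) by (unfold theta; field; lra).
  assert (0 < eta) by (apply Rdiv_lt_0_compat; lra).
  assert (0 < theta) by (apply Rdiv_lt_0_compat; lra).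
  nra.
Qed.

Lemma conv_limit_nonpos (d s : nat -> R) (D M B : R) (N : nat) :
  (forall j, 0 <= d j <= D) ->
  (forall Y, exists N', forall n, (N' <= n)%nat -> Y <= sum_f_R0 d n) ->
  Un_cv s M -> (forall n, (N <= n)%nat -> conv d s n <= B) -> M <= 0.
Proof.
  intros Hd Hsum Hs HB. apply Rnot_lt_le. intro HM.
  destruct (Un_cv_excess_finite_support s M (M / 2) Hs) as [K [psi [Hpsi0 [HpsiK Hpsi]]]]; [lra |].
  set (C := sum_f_R0 psi K).
  assert (Hlow : forall n, M / 2 * sum_f_R0 d n - D * C <= conv d s n).
  { intro n.
    assert (Hle : sum_f_R0 (fun j => d j * (M / 2) - psi (n - j)%nat * D) n <= conv d s n).
    { apply sum_Rle. intros j _.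
      specialize (Hpsi (n - j)%nat). apply Rabs_le_between in Hpsi.
      specialize (Hd j). specialize (Hpsi0 (n - j)%nat). nra. }
    rewrite minus_sum, <- (scal_sum d), <- (scal_sum (fun j => psi (n - j)%nat)),
      <- sum_f_R0_rev in Hle.
    assert (sum_f_R0 psi n <= C) by (apply sum_f_R0_finite_support; assumption).
    assert (0 <= D) by (specialize (Hd O); lra).
    nra. }
  set (Y := (B + D * C + 1) * 2 / M).
  destruct (Hsum Y) as [N' HN'].
  specialize (Hlow (max N N')). specialize (HB (max N N') (Nat.le_max_l _ _)).
  specialize (HN' (max N N') (Nat.le_max_r _ _)).
  assert (M / 2 * Y = B + D * C + 1) by (unfold Y; field; lra).
  assert (M / 2 * Y <= M / 2 * sum_f_R0 d (max N N')) by (apply Rmult_le_compat_l; lra).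
  lra.
Qed.

Lemma conv_bounded_limit_0 (d s : nat -> R) (D M B : R) (N : nat) :
  (forall j, 0 <= d j <= D) ->
  (forall Y, exists N', forall n, (N' <= n)%nat -> Y <= sum_f_R0 d n) ->
  Un_cv s M -> (forall n, (N <= n)%nat -> Rabs (conv d s n) <= B) -> M = 0.
Proof.
  intros Hd Hsum Hs HB.
  assert (M <= 0).
  { apply (conv_limit_nonpos d s D M B N Hd Hsum Hs).
    intros n Hn. specialize (HB n Hn). apply Rabs_le_between in HB. lra. }
  assert (- M <= 0).
  { apply (conv_limit_nonpos d (fun k => - s k) D (- M) B N Hd Hsum (CV_opp _ _ Hs)).
    intros n Hn. specialize (HB n Hn). apply Rabs_le_between in HB.
    rewrite conv_opp_r. lra. }
  lra.
Qed.

Lemma pow_m1_sub (n j : nat) : (j <= n)%nat -> (-1) ^ (n - j) = (-1) ^ n * (-1) ^ j.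
Proof.
  intro Hj. replace n with (n - j + j)%nat at 2 by lia.
  rewrite pow_add, Rmult_assoc, <- pow_add.
  replace (j + j)%nat with (2 * j)%nat by lia.
  rewrite pow_mult. replace ((-1) ^ 2) with 1 by ring. rewrite pow1. ring.
Qed.

Lemma pow_m1_even (m : nat) : (-1) ^ (2 * m) = 1.
Proof. rewrite pow_mult. replace ((-1) ^ 2) with 1 by ring. apply pow1. Qed.

Lemma sum_alt_delta (d : nat -> R) (n : nat) :
  sum_f_R0 (fun j => (-1) ^ j * delta d j) (S n) =
  sum_f_R0 (tg_alt d) (S n) + sum_f_R0 (tg_alt d) n.
Proof.
  induction n as [| n IH].
  - unfold tg_alt. simpl. ring.
  - rewrite tech5, IH, (tech5 (tg_alt d) (S n)), (tech5 (tg_alt d) n).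
    unfold tg_alt. simpl. ring.
Qed.

Lemma conv_delta_two_periodic (d : nat -> R) (A B : R) (n : nat) :
  conv (delta d) (fun k => A + (-1) ^ k * B) (S n) =
  A * d (S n) + (-1) ^ (S n) * B * (sum_f_R0 (tg_alt d) (S n) + sum_f_R0 (tg_alt d) n).
Proof.
  rewrite <- sum_alt_delta, <- (sum_f_R0_delta d (S n)).
  unfold conv. rewrite !scal_sum, <- plus_sum. apply sum_eq.
  intros j Hj. rewrite pow_m1_sub by exact Hj. ring.
Qed.

Lemma parity_cv_two_periodic (g : nat -> R) (Go Ge : R) :
  Un_cv (fun m => g (2 * m + 1)%nat) Go -> Un_cv (fun m => g (2 * m)%nat) Ge ->
  Un_cv (fun k => g k - ((Go + Ge) / 2 + (-1) ^ k * ((Ge - Go) / 2))) 0.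
Proof.
  intros Hgo Hge. apply Un_cv_parity.
  - apply (Un_cv_ext (fun m => g (2 * m)%nat - Ge)).
    + intro m. rewrite pow_m1_even. field.
    + replace 0 with (Ge - Ge) by ring. apply CV_minus; [exact Hge | apply Un_cv_const].
  - apply (Un_cv_ext (fun m => g (2 * m + 1)%nat - Go)).
    + intro m. rewrite pow_add, pow_m1_even. field.
    + replace 0 with (Go - Go) by ring. apply CV_minus; [exact Hgo | apply Un_cv_const].
Qed.

Section NonincreasingNull.

Variable d : nat -> R.
Hypothesis d_noninc : forall j, d (S j) <= d j.
Hypothesis d_cv_0 : Un_cv d 0.

Lemma noninc_le (i j : nat) : (i <= j)%nat -> d j <= d i.
Proof. intro Hij. induction Hij as [| j _ IH]; [lra |]. specialize (d_noninc j). lra. Qed.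

Lemma noninc_nonneg (j : nat) : 0 <= d j.
Proof.
  apply Rnot_lt_le. intro Hneg.
  destruct (d_cv_0 (- d j)) as [N HN]; [lra |].
  specialize (HN (max N j) (Nat.le_max_l N j)).
  pose proof (noninc_le j (max N j) (Nat.le_max_r N j)).
  unfold R_dist in HN. rewrite Rminus_0_r in HN. apply Rabs_def2 in HN. lra.
Qed.

Lemma sum_abs_delta (n : nat) : sum_f_R0 (fun j => Rabs (delta d j)) n = 2 * d O - d n.
Proof.
  induction n as [| n IH].
  - simpl. rewrite Rabs_right by (apply Rle_ge, noninc_nonneg). ring.
  - rewrite tech5, IH. simpl. rewrite Rabs_left1 by (specialize (d_noninc n); lra). ring.
Qed.

Lemma delta_cv_0 : Un_cv (delta d) 0.
Proof.
  apply (Un_cv_ext_eventually (fun j => d j - d (pred j)) _ _ 1).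
  - intros [| j] Hj; [lia | reflexivity].
  - replace 0 with (0 - 0) by ring. apply CV_minus; [exact d_cv_0 |].
    intros eps Heps. destruct (d_cv_0 eps Heps) as [N HN].
    exists (S N). intros n Hn. apply HN. lia.
Qed.

Lemma alternating_series_cv :
  Un_cv (sum_f_R0 (tg_alt d)) (Series (fun m => (-1) ^ (m + 2) * d m)).
Proof.
  destruct (alternated_series d d_noninc d_cv_0) as [l Hl].
  replace (Series _) with l; [exact Hl |].
  symmetry. apply is_series_unique, (is_series_ext (tg_alt d)).
  - intro n. unfold tg_alt. rewrite pow_add. simpl. ring.
  - apply is_series_Reals, Hl.
Qed.

(* [g] splits as a two-periodic part with values [Ge], [Go] plus a null sequence, whose
   contribution vanishes because [delta d] is absolutely summable. *)
Lemma conv_delta_parity_cv (g : nat -> R) (Go Ge : R) :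
  Un_cv (fun m => g (2 * m + 1)%nat) Go -> Un_cv (fun m => g (2 * m)%nat) Ge ->
  Un_cv (fun m => conv (delta d) g (2 * m + 2)%nat)
        ((Ge - Go) * Series (fun m => (-1) ^ (m + 2) * d m)).
Proof.
  intros Hgo Hge.
  set (W := Series _).
  set (A := (Go + Ge) / 2). set (B := (Ge - Go) / 2).
  set (e := fun k => g k - (A + (-1) ^ k * B)).
  assert (He : Un_cv e 0) by exact (parity_cv_two_periodic g Go Ge Hgo Hge).
  assert (Hconv_e : Un_cv (conv (delta d) e) 0).
  { apply (conv_cv_0 _ _ (2 * d O)); [| exact delta_cv_0 | exact He].
    intro n. rewrite sum_abs_delta. pose proof (noninc_nonneg n). lra. }
  assert (Hsplit : forall m, conv (delta d) g (2 * m + 2)%nat =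
            A * d (S (2 * m + 1))
            + B * (sum_f_R0 (tg_alt d) (S (2 * m + 1)) + sum_f_R0 (tg_alt d) (2 * m + 1))
            + conv (delta d) e (2 * m + 2)%nat).
  { intro m. rewrite (conv_ext_r _ g (fun k => (A + (-1) ^ k * B) + e k)) by (intro; unfold e; ring).
    rewrite conv_plus_r. replace (2 * m + 2)%nat with (S (2 * m + 1)) by lia.
    rewrite conv_delta_two_periodic. replace (S (2 * m + 1)) with (2 * (m + 1))%nat by lia.
    rewrite pow_m1_even. ring. }
  apply (Un_cv_ext _ _ (fun m => eq_sym (Hsplit m))).
  replace ((Ge - Go) * W) with (A * 0 + B * (W + W) + 0) by (unfold A, B; field).
  assert (Hsub : forall u l, Un_cv u l -> forall k, Un_cv (fun m => u (2 * m + k)%nat) l).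
  { intros u l Hu k. apply (Un_cv_subseq u (fun m => 2 * m + k)%nat); [intro; lia | exact Hu]. }
  apply CV_plus; [apply CV_plus |].
  - apply CV_mult; [apply Un_cv_const |]. apply (Hsub (fun n => d (S n))).
    apply (Un_cv_subseq d S); [intro; lia | exact d_cv_0].
  - apply CV_mult; [apply Un_cv_const |].
    apply CV_plus; [apply (Hsub (fun n => sum_f_R0 (tg_alt d) (S n))) | apply Hsub];
      [apply (Un_cv_subseq _ S); [intro; lia |] |]; apply alternating_series_cv.
  - apply Hsub, Hconv_e.
Qed.

End NonincreasingNull.

(** * Period-two limits of convolution equations *)

Record admissible_kernel (w : nat -> R) : Prop := {
  kernel_delta_noninc : forall j, delta w (S j) <= delta w j;
  kernel_delta_cv_0 : Un_cv (delta w) 0;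
  kernel_unbounded : forall Y, exists N, forall n, (N <= n)%nat -> Y <= w n }.

Section PeriodTwo.

Variables (w x g P : nat -> R) (c p xo xe Go Ge : R).
Hypothesis w_admissible : admissible_kernel w.
Hypothesis c_neq_0 : c <> 0.
Hypothesis x_eq : forall n, x (S n) = P n - c * conv w g n.
Hypothesis P_increment_cv : Un_cv (fun n => P (S n) - P n) p.
Hypothesis x_odd_cv : Un_cv (fun m => x (2 * m + 1)%nat) xo.
Hypothesis x_even_cv : Un_cv (fun m => x (2 * m)%nat) xe.
Hypothesis g_odd_cv : Un_cv (fun m => g (2 * m + 1)%nat) Go.
Hypothesis g_even_cv : Un_cv (fun m => g (2 * m)%nat) Ge.

Let w_delta_noninc := kernel_delta_noninc w w_admissible.
Let w_delta_cv_0 := kernel_delta_cv_0 w w_admissible.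

Lemma x_increment (n : nat) :
  x (S (S n)) - x (S n) = (P (S n) - P n) - c * conv (delta w) g (S n).
Proof. rewrite !x_eq, <- conv_delta. ring. Qed.

Lemma conv_delta_kernel_bounded : exists B, forall n, Rabs (conv (delta w) g (S n)) <= B.
Proof.
  destruct (parity_cv_bounded x xo xe x_odd_cv x_even_cv) as [Bx HBx].
  destruct (Un_cv_bounded _ _ P_increment_cv) as [BP HBP].
  assert (Hc : 0 < Rabs c) by (apply Rabs_pos_lt, c_neq_0).
  exists ((BP + 2 * Bx) / Rabs c). intro n.
  apply (Rmult_le_reg_l (Rabs c)); [exact Hc |].
  replace (Rabs c * ((BP + 2 * Bx) / Rabs c)) with (BP + 2 * Bx) by (field; lra).
  rewrite <- Rabs_mult.
  replace (c * conv (delta w) g (S n)) with ((P (S n) - P n) - (x (S (S n)) - x (S n)))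
    by (rewrite x_increment; ring).
  specialize (HBP n). pose proof (HBx (S (S n))). pose proof (HBx (S n)).
  apply Rabs_le_between in HBP, H, H0. apply Rabs_le. lra.
Qed.

(* [s k = g (k+1) + g k] tends to [Go + Ge] while [conv (delta w) s] stays bounded; as the
   partial sums of [delta w] (the values of [w]) are unbounded, the limit must vanish. *)
Lemma parity_limits_sum_0 : Go + Ge = 0.
Proof.
  set (s := fun k => g (S k) + g k).
  assert (Hs : Un_cv s (Go + Ge)).
  { apply Un_cv_parity.
    - apply (Un_cv_ext (fun m => g (2 * m + 1)%nat + g (2 * m)%nat)).
      + intro m. unfold s. do 2 f_equal. lia.
      + apply CV_plus; assumption.
    - replace (Go + Ge) with (Ge + Go) by ring.
      apply (Un_cv_ext (fun m => g (2 * S m)%nat + g (2 * m + 1)%nat)).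
      + intro m. unfold s. do 2 f_equal. lia.
      + apply CV_plus; [| exact g_odd_cv].
        apply (Un_cv_subseq (fun m => g (2 * m)%nat) S); [intro; lia | exact g_even_cv]. }
  destruct conv_delta_kernel_bounded as [B HB].
  apply (conv_bounded_limit_0 (delta w) s (delta w O) _ (2 * B + delta w O * Rabs (g O)) 1).
  - intro j. split; [apply (noninc_nonneg _ w_delta_noninc w_delta_cv_0) |].
    apply (noninc_le _ w_delta_noninc). lia.
  - intro Y. destruct (kernel_unbounded w w_admissible Y) as [N HN].
    exists N. intros n Hn. rewrite sum_f_R0_delta. apply HN, Hn.
  - exact Hs.
  - intros [| n] Hn; [lia |].
    unfold s. rewrite conv_plus_r, conv_shift_r.
    pose proof (HB n). pose proof (HB (S n)).
    assert (Hd : Rabs (delta w (S (S n)) * g O) <= delta w O * Rabs (g O)).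
    { rewrite Rabs_mult, Rabs_right by apply Rle_ge, (noninc_nonneg _ w_delta_noninc w_delta_cv_0).
      apply Rmult_le_compat_r; [apply Rabs_pos | apply (noninc_le _ w_delta_noninc); lia]. }
    apply Rabs_le_between in H, H0, Hd. apply Rabs_le. lra.
Qed.

(* The second difference of [x] along even indices tends to [2 (xo - xe)], and by [x_eq] it is
   a second difference of [P] minus [c * conv (delta (delta w)) g]. *)
Lemma parity_limits_gap :
  xo - xe = c * Series (fun m => (-1) ^ (m + 2) * delta w m) / 2 * (Go - Ge).
Proof.
  set (y := fun m => x (2 * m + 3)%nat - 2 * x (2 * m + 2)%nat + x (2 * m + 1)%nat).
  assert (Hsub : forall u l k, Un_cv (fun m => u (2 * m)%nat) l ->
                   Un_cv (fun m => u (2 * m + 2 * k)%nat) l).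
  { intros u l k Hu. apply (Un_cv_ext (fun m => u (2 * (m + k))%nat)); [intro; f_equal; lia |].
    apply (Un_cv_subseq (fun m => u (2 * m)%nat) (fun m => m + k)%nat); [intro; lia | exact Hu]. }
  assert (Hy_x : Un_cv y (xo - 2 * xe + xo)).
  { apply CV_plus; [apply CV_minus |].
    - apply (Un_cv_ext (fun m => x (2 * m + 2 * 1 + 1)%nat)); [intro; f_equal; lia |].
      apply (Hsub (fun m => x (m + 1)%nat)), x_odd_cv.
    - apply CV_mult; [apply Un_cv_const |].
      apply (Un_cv_ext (fun m => x (2 * m + 2 * 1)%nat)); [intro; f_equal; lia |].
      apply Hsub, x_even_cv.
    - exact x_odd_cv. }
  set (W := Series (fun m => (-1) ^ (m + 2) * delta w m)).
  assert (Hy_P : Un_cv y ((p - p) - c * ((Ge - Go) * W))).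
  { apply (Un_cv_ext (fun m => ((P (S (2 * m + 1)) - P (2 * m + 1)%nat) - (P (S (2 * m)) - P (2 * m)%nat))
                               - c * conv (delta (delta w)) g (2 * m + 2)%nat)).
    - intro m. unfold y.
      replace (2 * m + 3)%nat with (S (S (S (2 * m)))) by lia.
      replace (2 * m + 2)%nat with (S (S (2 * m))) by lia.
      replace (2 * m + 1)%nat with (S (2 * m)) by lia.
      replace (x (S (S (S (2 * m)))) - 2 * x (S (S (2 * m))) + x (S (2 * m)))
        with ((x (S (S (S (2 * m)))) - x (S (S (2 * m)))) - (x (S (S (2 * m))) - x (S (2 * m))))
        by ring.
      rewrite !x_increment, <- conv_delta. ring.
    - apply CV_minus; [apply CV_minus | apply CV_mult; [apply Un_cv_const |]].
      + apply (Un_cv_subseq (fun n => P (S n) - P n) (fun m => 2 * m + 1)%nat);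
          [intro; lia | exact P_increment_cv].
      + apply (Un_cv_subseq (fun n => P (S n) - P n) (fun m => 2 * m)%nat);
          [intro; lia | exact P_increment_cv].
      + exact (conv_delta_parity_cv _ w_delta_noninc w_delta_cv_0 g Go Ge g_odd_cv g_even_cv). }
  pose proof (UL_sequence _ _ _ Hy_x Hy_P) as Hlim.
  apply (Rmult_eq_reg_l 2); [| lra]. lra.
Qed.

End PeriodTwo.

(** * The kernels *)

Lemma exists_nat_gt (T : R) : exists N : nat, T < INR N.
Proof. destruct (INR_archimed 1 T) as [N HN]; [lra |]. exists N. lra. Qed.

Lemma Rpower_unbounded (a : R) : 0 < a ->
  forall Y, exists T, forall t, T <= t -> Y <= Rpower t a.
Proof.
  intros Ha Y. exists (exp ((Y - 1) / a)). intros t Ht. pose proof (exp_pos ((Y - 1) / a)).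
  assert ((Y - 1) / a <= ln t).
  { rewrite <- (ln_exp ((Y - 1) / a)). apply ln_le; lra. }
  pose proof (exp_ineq1_le (a * ln t)).
  assert (a * ((Y - 1) / a) = Y - 1) by (field; lra).
  unfold Rpower. nra.
Qed.

Lemma Rpower_vanishes (a : R) : a < 0 ->
  forall eps, 0 < eps -> exists T, forall t, T <= t -> Rpower t a < eps.
Proof.
  intros Ha eps Heps. destruct (Rpower_unbounded (- a) ltac:(lra) (2 / eps)) as [T HTt].
  exists T. intros t Ht.
  replace a with (- - a) by ring. rewrite Rpower_Ropp.
  specialize (HTt t Ht). pose proof (Rpower_pos t (- a)).
  apply (Rmult_lt_reg_l (Rpower t (- a))); [assumption |].
  rewrite Rinv_r by lra.
  assert (eps * (2 / eps) = 2) by (field; lra). nra.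
Qed.

Lemma Rpower_le_base_nonpos (a x y : R) : a <= 0 -> 0 < x <= y -> Rpower y a <= Rpower x a.
Proof.
  intros Ha Hxy. unfold Rpower. apply exp_le.
  assert (ln x <= ln y) by (apply ln_le; lra). nra.
Qed.

Section PowerKernel.

Variable b : R.
Hypothesis b_range : 0 < b < 1.

Definition power_kernel (j : nat) : R := Rpower (INR (S j)) b.

Lemma power_increment_mvt (t : R) : 0 < t ->
  exists xi, t < xi < t + 1 /\ Rpower (t + 1) b - Rpower t b = b * Rpower xi (b - 1).
Proof.
  intro Ht.
  destruct (MVT_cor2 (fun u => Rpower u b) (fun u => b * Rpower u (b - 1)) t (t + 1))
    as [xi [Hxi Hrange]]; [lra | |].
  - intros u Hu. apply derivable_pt_lim_power. lra.
  - exists xi. split; [exact Hrange |]. rewrite Hxi. ring.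
Qed.

Lemma power_kernel_delta_succ (j : nat) :
  delta power_kernel (S j) = Rpower (INR j + 1 + 1) b - Rpower (INR j + 1) b.
Proof.
  change (Rpower (INR (S (S j))) b - Rpower (INR (S j)) b
          = Rpower (INR j + 1 + 1) b - Rpower (INR j + 1) b).
  rewrite !S_INR. reflexivity.
Qed.

Lemma power_kernel_delta_succ_mvt (j : nat) :
  exists xi, INR j + 1 < xi < INR j + 2 /\ delta power_kernel (S j) = b * Rpower xi (b - 1).
Proof.
  destruct (power_increment_mvt (INR j + 1)) as [xi [Hxi Heq]]; [pose proof (pos_INR j); lra |].
  exists xi. split; [lra |]. rewrite power_kernel_delta_succ. exact Heq.
Qed.

Lemma power_kernel_delta_noninc (j : nat) : delta power_kernel (S j) <= delta power_kernel j.
Proof.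
  destruct j as [| j].
  - rewrite power_kernel_delta_succ. change (delta power_kernel O) with (Rpower (INR 1) b).
    simpl INR. rewrite Rplus_0_l. replace (1 + 1) with 2 by ring.
    assert (Rpower 1 b = 1) by (unfold Rpower; rewrite ln_1, Rmult_0_r; apply exp_0).
    assert (Rpower 2 b <= Rpower 2 1) by (apply Rle_Rpower; lra).
    rewrite Rpower_1 in * by lra. lra.
  - destruct (power_kernel_delta_succ_mvt (S j)) as [xi2 [Hxi2 ->]].
    destruct (power_kernel_delta_succ_mvt j) as [xi1 [Hxi1 ->]].
    rewrite S_INR in Hxi2. pose proof (pos_INR j).
    apply Rmult_le_compat_l; [lra |]. apply Rpower_le_base_nonpos; lra.
Qed.

Lemma power_kernel_delta_cv_0 : Un_cv (delta power_kernel) 0.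
Proof.
  intros eps Heps.
  destruct (Rpower_vanishes (b - 1) ltac:(lra) eps Heps) as [T HTt].
  destruct (exists_nat_gt T) as [N HN].
  exists (S N). intros [| j] Hj; [lia |].
  destruct (power_kernel_delta_succ_mvt j) as [xi [Hxi ->]].
  assert (INR N <= INR j) by (apply le_INR; lia).
  specialize (HTt xi ltac:(lra)). pose proof (Rpower_pos xi (b - 1)).
  unfold R_dist. rewrite Rminus_0_r, Rabs_right by nra. nra.
Qed.

Lemma power_kernel_unbounded (Y : R) :
  exists N, forall n, (N <= n)%nat -> Y <= power_kernel n.
Proof.
  destruct (Rpower_unbounded b ltac:(lra) Y) as [T HTt].
  destruct (exists_nat_gt T) as [N HN].
  exists N. intros n Hn. apply HTt.
  assert (INR N <= INR n) by (apply le_INR, Hn). rewrite S_INR. lra.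
Qed.

Lemma power_kernel_admissible : admissible_kernel power_kernel.
Proof.
  split; [exact power_kernel_delta_noninc | exact power_kernel_delta_cv_0 |
          exact power_kernel_unbounded].
Qed.

End PowerKernel.

Fixpoint shifted_harmonic (k : nat) : R :=
  match k with O => 0 | S k => shifted_harmonic k + / (INR k + 2) end.

Lemma shifted_harmonic_nonneg (k : nat) : 0 <= shifted_harmonic k.
Proof.
  induction k as [| k IH]; simpl; [lra |].
  pose proof (pos_INR k). pose proof (Rinv_0_lt_compat (INR k + 2) ltac:(lra)). lra.
Qed.

Lemma exp_shifted_harmonic_ge (k : nat) : (INR k + 2) / 2 <= exp (shifted_harmonic k).
Proof.
  induction k as [| k IH].
  - simpl. rewrite exp_0. lra.
  - simpl shifted_harmonic. rewrite exp_plus, S_INR. pose proof (pos_INR k).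
    pose proof (exp_ineq1_le (/ (INR k + 2))).
    pose proof (Rinv_0_lt_compat (INR k + 2) ltac:(lra)).
    apply Rle_trans with ((INR k + 2) / 2 * (1 + / (INR k + 2))).
    + right. field. lra.
    + apply Rmult_le_compat; lra.
Qed.

Lemma shifted_harmonic_unbounded (Y : R) :
  exists N, forall k, (N <= k)%nat -> Y <= shifted_harmonic k.
Proof.
  destruct (exists_nat_gt (2 * exp Y)) as [N HN].
  exists N. intros k Hk.
  assert (INR N <= INR k) by (apply le_INR, Hk).
  pose proof (exp_shifted_harmonic_ge k).
  left. apply exp_lt_inv. lra.
Qed.

(* Models the kernel [Gamma (j + a) / Gamma (j + 1)] of map (b) through its recurrence. *)
Section GammaRatioKernel.

Variables (a : R) (V : nat -> R).
Hypothesis a_range : 1 < a < 2.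
Hypothesis V_0_pos : 0 < V O.
Hypothesis V_succ : forall k, V (S k) = V k * (a + INR k) / (1 + INR k).

Lemma gamma_ratio_pos (k : nat) : 0 < V k.
Proof.
  induction k as [| k IH]; [exact V_0_pos |].
  rewrite V_succ. pose proof (pos_INR k).
  apply Rdiv_lt_0_compat; [apply Rmult_lt_0_compat |]; lra.
Qed.

Lemma gamma_ratio_delta (k : nat) : delta V (S k) = (a - 1) * (V k / (1 + INR k)).
Proof. simpl delta. rewrite V_succ. pose proof (pos_INR k). field. lra. Qed.

Lemma gamma_ratio_delta_noninc (j : nat) : delta V (S j) <= delta V j.
Proof.
  pose proof (gamma_ratio_pos j).
  destruct j as [| k]; rewrite gamma_ratio_delta.
  - simpl. replace (1 + 0) with 1 by ring. nra.
  - rewrite gamma_ratio_delta, V_succ, S_INR. pose proof (pos_INR k).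
    pose proof (gamma_ratio_pos k).
    replace (V k * (a + INR k) / (1 + INR k) / (1 + (INR k + 1)))
      with (V k / (1 + INR k) * ((a + INR k) / (INR k + 2))) by (field; lra).
    assert ((a + INR k) / (INR k + 2) <= 1)
      by (apply (Rmult_le_reg_r (INR k + 2)); [lra | unfold Rdiv; rewrite Rmult_assoc, Rinv_l; lra]).
    assert (0 <= V k / (1 + INR k)) by (apply Rdiv_le_0_compat; lra).
    apply Rmult_le_compat_l; [lra |]. nra.
Qed.

Lemma gamma_ratio_lower_bound (k : nat) : V O * (1 + (a - 1) * shifted_harmonic k) <= V k.
Proof.
  induction k as [| k IH]; [simpl; lra |].
  replace (V (S k)) with (V k + delta V (S k)) by (simpl delta; ring).
  rewrite gamma_ratio_delta. simpl shifted_harmonic. pose proof (pos_INR k).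
  assert (V O <= V k).
  { pose proof (shifted_harmonic_nonneg k).
    assert (0 <= V O * ((a - 1) * shifted_harmonic k))
      by (apply Rmult_le_pos; [lra | apply Rmult_le_pos; lra]).
    lra. }
  assert (V O / (INR k + 2) <= V k / (1 + INR k)).
  { unfold Rdiv. apply Rmult_le_compat; [lra | left; apply Rinv_0_lt_compat; lra | lra |].
    apply Rinv_le_contravar; lra. }
  unfold Rdiv in *. nra.
Qed.

(* [V k / (k+1)] is multiplied by [1 - (2-a)/(k+2) <= exp (-(2-a)/(k+2))] at each step. *)
Lemma gamma_ratio_decay (k : nat) :
  V k / (1 + INR k) * exp ((2 - a) * shifted_harmonic k) <= V O.
Proof.
  induction k as [| k IH]; [simpl; rewrite Rmult_0_r, exp_0; lra |].
  set (u := (2 - a) / (INR k + 2)).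
  pose proof (pos_INR k). pose proof (gamma_ratio_pos k).
  replace (V (S k) / (1 + INR (S k))) with (V k / (1 + INR k) * (1 - u))
    by (rewrite V_succ, S_INR; unfold u; field; lra).
  simpl shifted_harmonic. rewrite Rmult_plus_distr_l, exp_plus.
  replace ((2 - a) * / (INR k + 2)) with u by reflexivity.
  assert (Hu : (1 - u) * exp u <= 1).
  { pose proof (exp_ineq1_le (- u)). pose proof (exp_pos u).
    rewrite exp_Ropp in H1. apply (Rmult_le_reg_r (/ exp u)); [apply Rinv_0_lt_compat; lra |].
    rewrite Rmult_assoc, Rinv_r, Rmult_1_l, Rmult_1_r by lra. lra. }
  assert (0 <= V k / (1 + INR k) * exp ((2 - a) * shifted_harmonic k))
    by (apply Rmult_le_pos; [apply Rdiv_le_0_compat; lra | left; apply exp_pos]).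
  replace (V k / (1 + INR k) * (1 - u) * (exp ((2 - a) * shifted_harmonic k) * exp u))
    with (V k / (1 + INR k) * exp ((2 - a) * shifted_harmonic k) * ((1 - u) * exp u)) by ring.
  nra.
Qed.

Lemma gamma_ratio_delta_cv_0 : Un_cv (delta V) 0.
Proof.
  intros eps Heps.
  destruct (shifted_harmonic_unbounded (V O / ((2 - a) * eps))) as [N HN].
  exists (S N). intros [| k] Hk; [lia |].
  specialize (HN k ltac:(lia)). pose proof (gamma_ratio_decay k).
  pose proof (exp_ineq1_le ((2 - a) * shifted_harmonic k)).
  pose proof (pos_INR k). pose proof (gamma_ratio_pos k).
  set (Z := V k / (1 + INR k)) in *.
  assert (HZ0 : 0 <= Z) by (apply Rdiv_le_0_compat; lra).
  assert (Hgap : V O / eps <= (2 - a) * shifted_harmonic k).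
  { apply (Rmult_le_compat_l (2 - a)) in HN; [| lra].
    replace ((2 - a) * (V O / ((2 - a) * eps))) with (V O / eps) in HN by (field; lra). exact HN. }
  assert (HZ : Z < eps).
  { apply Rnot_le_lt. intro Hge.
    assert (eps * (1 + V O / eps) <= Z * exp ((2 - a) * shifted_harmonic k))
      by (apply Rmult_le_compat; [lra | assert (0 <= V O / eps) by (apply Rdiv_le_0_compat; lra); lra | lra | lra]).
    replace (eps * (1 + V O / eps)) with (eps + V O) in H3 by (field; lra). lra. }
  unfold R_dist. rewrite Rminus_0_r, gamma_ratio_delta. fold Z.
  rewrite Rabs_right by nra. nra.
Qed.

Lemma gamma_ratio_unbounded (Y : R) : exists N, forall n, (N <= n)%nat -> Y <= V n.
Proof.
  destruct (shifted_harmonic_unbounded (Rabs Y / (V O * (a - 1)))) as [N HN].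
  exists N. intros n Hn. specialize (HN n Hn). pose proof (gamma_ratio_lower_bound n).
  assert (Rabs Y <= V O * (a - 1) * shifted_harmonic n).
  { apply (Rmult_le_compat_l (V O * (a - 1))) in HN; [| nra].
    replace (V O * (a - 1) * (Rabs Y / (V O * (a - 1)))) with (Rabs Y) in HN by (field; nra).
    exact HN. }
  pose proof (Rle_abs Y). nra.
Qed.

Lemma gamma_ratio_admissible : admissible_kernel V.
Proof.
  split; [exact gamma_ratio_delta_noninc | exact gamma_ratio_delta_cv_0 | exact gamma_ratio_unbounded].
Qed.

End GammaRatioKernel.

(** * The three universal maps *)

Lemma fold_right_Rplus_acc (l : list R) (a : R) : fold_right Rplus a l = fold_right Rplus 0 l + a.
Proof. induction l as [| y l IH]; simpl; [ring | rewrite IH; ring]. Qed.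

Lemma fsum_succ (n : nat) (f : nat -> R) : fsum (S n) f = sum_f_R0 f n.
Proof.
  induction n as [| n IH]; [unfold fsum; simpl; ring |].
  unfold fsum in *. rewrite seq_S, map_app, fold_right_app, fold_right_Rplus_acc, IH, tech5.
  simpl. ring.
Qed.

(* [g] need only agree with [G o x] from index 1 on: map (b) does not involve [G (x 0)]. *)
Definition convolution_form (x : nat -> R) (c : R) (w : nat -> R) (G : R -> R) : Prop :=
  exists (P g : nat -> R) (p : R),
    Un_cv (fun n => P (S n) - P n) p /\
    (forall n, (1 <= n)%nat -> g n = G (x n)) /\
    (forall n, x (S n) = P n - c * conv w g n).

Lemma Un_cv_affine_increment (p0 p1 : R) :
  Un_cv (fun n => (p0 + p1 * INR (S (S n))) - (p0 + p1 * INR (S n))) p1.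
Proof.
  apply (Un_cv_ext (fun _ => p1)); [intro n; rewrite (S_INR (S n)); ring | apply Un_cv_const].
Qed.

Lemma caputo_map_convolution_form (alpha h b0 b1 : R) (G : R -> R) (x : nat -> R) :
  caputo_map alpha h b0 b1 G x ->
  convolution_form x (Rpower h alpha / Gamma alpha) (fun j => U CaputoMap alpha (S j)) G.
Proof.
  intro Hx. exists (fun n => b0 + b1 * h * INR (S n)), (fun k => G (x k)), (b1 * h).
  split; [apply Un_cv_affine_increment | split; [reflexivity |]].
  intro n. rewrite Hx, fsum_succ, conv_rev. do 2 f_equal. apply sum_eq.
  intros k Hk. rewrite Nat.add_1_r. apply Rmult_comm.
Qed.

Lemma hdiff_map_convolution_form (alpha h c0 c1 : R) (G : R -> R) (x : nat -> R) :
  hdiff_map alpha h c0 c1 G x ->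
  convolution_form x (Rpower h alpha / Gamma alpha) (fun j => U HDiffMap alpha (S j)) G.
Proof.
  intro Hx.
  exists (fun n => c0 + c1 * h * INR (S n)), (fun k => match k with O => 0 | S _ => G (x k) end),
    (c1 * h).
  split; [apply Un_cv_affine_increment | split; [intros [| n] Hn; [lia | reflexivity] |]].
  intro n. rewrite Hx, conv_rev. do 2 f_equal. destruct n as [| m]; [unfold fsum; simpl; ring |].
  rewrite fsum_succ, (decomp_sum _ (S m)) by lia. simpl pred. rewrite Rmult_0_r, Rplus_0_l.
  apply sum_eq. intros s Hs.
  replace (S m - S s)%nat with (m - s)%nat by reflexivity.
  replace (S m - s)%nat with (S (m - s)) by lia.
  change (U HDiffMap alpha (S (m - s)))
    with (Gamma (INR (S (m - s)) + alpha - 1) / Gamma (INR (S (m - s)))).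
  replace (INR (S (m - s)) - 1 + alpha) with (INR (S (m - s)) + alpha - 1) by ring.
  reflexivity.
Qed.

Lemma rl_map_convolution_form (alpha h c1 : R) (G : R -> R) (x : nat -> R) :
  1 < alpha < 2 -> 0 < h -> rl_map alpha h c1 G x ->
  convolution_form x (Rpower h alpha / Gamma alpha) (fun j => U RLMap alpha (S j)) G.
Proof.
  intros Ha Hh Hx.
  set (A := c1 / Gamma alpha * Rpower h (alpha - 1)).
  exists (fun n => A * power_kernel (alpha - 1) n), (fun k => G (x k)), 0.
  split; [| split; [reflexivity |]].
  - apply (Un_cv_ext (fun n => A * delta (power_kernel (alpha - 1)) (S n)));
      [intro n; cbn [delta]; ring |].
    replace 0 with (A * 0) by ring. apply CV_mult; [apply Un_cv_const |].
    apply (Un_cv_subseq _ S); [intro; lia |]. apply power_kernel_delta_cv_0. lra.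
  - intro n. rewrite Hx by lia. f_equal.
    + unfold A, power_kernel. rewrite <- Rpower_mult_distr by (try apply lt_0_INR; lia || lra). ring.
    + f_equal. rewrite fsum_succ, conv_rev. apply sum_eq.
      intros k Hk. rewrite Nat.sub_succ_l by exact Hk. reflexivity.
Qed.

Lemma universal_map_convolution_form (K : map_kind) (alpha h : R) (G : R -> R) (x : nat -> R) :
  1 < alpha < 2 -> 0 < h -> is_universal_map K alpha h G x ->
  convolution_form x (Rpower h alpha / Gamma alpha) (fun j => U K alpha (S j)) G.
Proof.
  intros Ha Hh Hmap. destruct K; simpl in Hmap.
  - destruct Hmap as [b0 [b1 Hx]]. exact (caputo_map_convolution_form _ _ _ _ _ _ Hx).
  - destruct Hmap as [c0 [c1 Hx]]. exact (hdiff_map_convolution_form _ _ _ _ _ _ Hx).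
  - destruct Hmap as [c1 Hx]. exact (rl_map_convolution_form _ _ _ _ _ Ha Hh Hx).
Qed.

Lemma U_kernel_admissible (K : map_kind) (alpha : R) :
  1 < alpha < 2 -> admissible_kernel (fun j => U K alpha (S j)).
Proof.
  intro Ha. destruct K; [exact (power_kernel_admissible (alpha - 1) ltac:(lra)) | |
                         exact (power_kernel_admissible (alpha - 1) ltac:(lra))].
  apply (gamma_ratio_admissible alpha); [exact Ha | |].
  - change (0 < Gamma (INR 1 + alpha - 1) / Gamma (INR 1)). simpl INR.
    apply Rdiv_lt_0_compat; apply Gamma_pos; lra.
  - intro k. pose proof (pos_INR k).
    change (Gamma (INR (S (S k)) + alpha - 1) / Gamma (INR (S (S k)))
            = Gamma (INR (S k) + alpha - 1) / Gamma (INR (S k)) * (alpha + INR k) / (1 + INR k)).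
    rewrite !S_INR.
    replace (INR k + 1 + 1 + alpha - 1) with (INR k + alpha + 1) by ring.
    replace (INR k + 1 + alpha - 1) with (INR k + alpha) by ring.
    rewrite !Gamma_succ by lra.
    pose proof (Gamma_pos (INR k + alpha) ltac:(lra)). pose proof (Gamma_pos (INR k + 1) ltac:(lra)).
    field. lra.
Qed.

Lemma W_tilde_delta (K : map_kind) (alpha : R) :
  W_tilde K alpha = Series (fun m => (-1) ^ (m + 2) * delta (fun j => U K alpha (S j)) m).
Proof. apply Series_ext. intros [| m]; [simpl; ring | reflexivity]. Qed.

Lemma convolution_form_period_two (x w : nat -> R) (c : R) (G : R -> R) (xo xe : R) :
  admissible_kernel w -> c <> 0 -> continuity G -> convolution_form x c w G ->
  Un_cv (fun m => x (2 * m + 1)%nat) xo -> Un_cv (fun m => x (2 * m)%nat) xe ->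
  G xo + G xe = 0 /\
  xo - xe = c * Series (fun m => (-1) ^ (m + 2) * delta w m) / 2 * (G xo - G xe).
Proof.
  intros Hw Hc HG [P [g [p [HP [Hg Hx]]]]] Hxo Hxe.
  assert (Hgo : Un_cv (fun m => g (2 * m + 1)%nat) (G xo)).
  { apply (Un_cv_comp_eventually G (fun m => x (2 * m + 1)%nat) _ _ 0); [apply HG | | exact Hxo].
    intros m _. apply Hg. lia. }
  assert (Hge : Un_cv (fun m => g (2 * m)%nat) (G xe)).
  { apply (Un_cv_comp_eventually G (fun m => x (2 * m)%nat) _ _ 1); [apply HG | | exact Hxe].
    intros m Hm. apply Hg. lia. }
  split; [eapply parity_limits_sum_0 | eapply parity_limits_gap]; eassumption.
Qed.

Theorem mainTheorem2 (K : map_kind) (alpha h : R) (G : R -> R) (x : nat -> R)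
    (xo xe : R) :
  1 < alpha < 2 -> 0 < h -> continuity G ->
  is_universal_map K alpha h G x ->
  is_lim_seq (fun n => x (2 * n + 1)%nat) xo ->
  is_lim_seq (fun n => x (2 * n)%nat) xe ->
  G xo + G xe = 0 /\
  xo - xe = W_tilde K alpha / (2 * Gamma alpha) * Rpower h alpha * (G xo - G xe).
Proof.
  intros Ha Hh HG Hmap Hxo Hxe.
  apply is_lim_seq_Reals in Hxo, Hxe.
  pose proof (Gamma_pos alpha ltac:(lra)) as HGamma.
  assert (Hc : Rpower h alpha / Gamma alpha <> 0)
    by (apply Rgt_not_eq, Rdiv_lt_0_compat; [apply Rpower_pos | exact HGamma]).
  destruct (convolution_form_period_two x _ _ G xo xe (U_kernel_admissible K alpha Ha) Hc HG
              (universal_map_convolution_form K alpha h G x Ha Hh Hmap) Hxo Hxe) as [Hsum Hgap].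
  split; [exact Hsum |].
  rewrite Hgap, W_tilde_delta. field. lra.
Qed.
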